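(* Assume the standing assumptions below and let $f$ satisfy the conditions (F). Let $g$ be defined by $$g(t,x)=A c_0(x)\Big[\varphi(c_0(x))\,e^{\lambda A\int_0^t f(\tau,x)d\tau}-Bc_0(x)\Big]^{-1},\qquad (t,x)\in[0,T]\times\Omega_{h,0}^+.$$ Then there are constants $k_1,\kappa,\hat C_1,\hat C_2>0$, depending only on $A,B,C_0,c_m,\lambda,T,\eta$ (and not on $h$, nor on $f$ beyond (F)), such that $$\sup_{t\in[0,T]}\|C_0-g(t,\cdot)\|^2_{L^2(\Omega_h^+)}\le k_1\Big(\|C_0-c_0\|^2_{L^2(\Omega_h^+)}+\kappa\sup_{t\in[0,T]}\|f(t,\cdot)\|^2_{L^2(\Omega_h^+)}\Big),$$ $$\|g\|_{L^\infty([0,T]\times\Omega_h^+)}\le\hat C_1,\qquad \sup_{t\in[0,T]}\|D^+_hg(t,\cdot)\|^2_{L^2(\Omega_h^+)}\le\hat C_2\,T\Big(\|D^+_hc_0\|^2_{L^2(\Omega_h^+)}+\kappa\int_0^T\|D^+_hf(t,\cdot)\|^2_{L^2(\Omega_h^+)}dt\Big).$$ Moreover the last estimate also holds for $\varphi(g)$ in place of $g$, up to the factor $|B|$.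
   Context: Discrete setting: $h>0$, $\Omega_h^+=\{h,2h,\dots\}$, $\Omega_{h,0}^+=\Omega_h^+\cup\{0\}$, $\|f\|_{L^p(\Omega_h^+)}=(h\sum_{z\in\Omega_h^+}|f(z)|^p)^{1/p}$, $D^+_hf(x)=\frac{f(x+h)-f(x)}{h}$, $D^-_hf(x)=\frac{f(x)-f(x-h)}{h}$. Standing assumptions: $A=1$, $B\in\{-1,1\}$, $\varphi(c)=A+Bc$, $\lambda>0$, $T>0$, $\eta>0$; $\psi\in C^\beta([0,T])$ for some $\beta\in(1/4,1/2)$ with $0\le\psi\le\eta$, $\psi(0)=0$; $s_0:\Omega_{h,0}^+\to\mathbb{R}$ with $0\le s_0\le\eta$, $s_0(0)=0$, $s_0,D^+_hs_0\in L^2(\Omega_h^+)$; $c_0:\Omega_{h,0}^+\to\mathbb{R}$ with $0<c_m\le c_0\le C_0$ and $C_0-c_0,\ D^+_hc_0\in L^2(\Omega_h^+)$; there are constants $0<\varphi_{\min}\le\varphi_{\max}$ with $\varphi_{\min}\le\varphi(c)\le\varphi_{\max}$ for all $c\in[0,C_0]$; if $B=1$ then $\eta<1$. Conditions (F) on a Borel $f:[0,T]\times\Omega_{h,0}^+\to\mathbb{R}$, for some $K>0$: $f\in C([0,T],L^2(\Omega_h^+))$, $D^+_hf\in L^2([0,T],L^2(\Omega_h^+))$, $\sup_t\|f(t)\|^2_{L^2(\Omega_h^+)}+\int_0^T\|D^+_hf(t)\|^2_{L^2(\Omega_h^+)}dt\le K$, $f\ge0$, $f(t,0)=\psi(t)$,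 and $0\le f\le\eta$. *)

From Stdlib Require Import Reals.
From Coquelicot Require Import Coquelicot.
Open Scope R_scope.

(* Grid functions on Omega_{h,0}^+ = {0, h, 2h, ...} are represented as
   u : nat -> R, where u k is the value at the point k*h. *)

(* phi(c) = A + B c with A = 1. *)
Definition phi (B c : R) : R := 1 + B * c.

Definition Dh (h : R) (u : nat -> R) (k : nat) : R := (u (S k) - u k) / h.

(* u restricted to Omega_h^+ = {h, 2h, ...} (indices k >= 1) is in L^2. *)
Definition L2 (u : nat -> R) : Prop := ex_series (fun k => (u (S k)) ^ 2).

Definition l2sq (h : R) (u : nat -> R) : R := h * Series (fun k => (u (S k)) ^ 2).

Definition supT (T : R) (F : R -> R) : Rbar :=
  Lub_Rbar (fun y => exists t, 0 <= t <= T /\ y = F t).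

Definition holder (beta T : R) (psi : R -> R) : Prop :=
  exists L, 0 <= L /\
    forall s t, 0 <= s <= T -> 0 <= t <= T ->
      Rabs (psi t - psi s) <= L * Rpower (Rabs (t - s)) beta.

Definition condF (h T eta : R) (psi : R -> R) (K : R) (f : R -> nat -> R) : Prop :=
  (forall t, 0 <= t <= T -> L2 (f t)) /\
  (forall t, 0 <= t <= T -> forall eps, 0 < eps -> exists delta, 0 < delta /\
     forall s, 0 <= s <= T -> Rabs (s - t) < delta ->
       sqrt (l2sq h (fun k => f s k - f t k)) < eps) /\
  (forall t, 0 <= t <= T -> L2 (Dh h (f t))) /\
  ex_RInt (fun t => l2sq h (Dh h (f t))) 0 T /\
  Rbar_le (Rbar_plus (supT T (fun t => l2sq h (f t)))
                     (RInt (fun t => l2sq h (Dh h (f t))) 0 T)) K /\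
  (forall t k, 0 <= t <= T -> 0 <= f t k) /\
  (forall t, 0 <= t <= T -> f t 0%nat = psi t) /\
  (forall t k, 0 <= t <= T -> 0 <= f t k <= eta).

Definition gfun (B lam : R) (c0 : nat -> R) (f : R -> nat -> R) (t : R) (k : nat) : R :=
  c0 k / (phi B (c0 k) * exp (lam * RInt (fun tau => f tau k) 0 t) - B * c0 k).

From Stdlib Require Import Reals Lra Lia.
From Coquelicot Require Import Coquelicot.
Open Scope R_scope.

(* g(t,x) = G(c0(x), I(t,x)) with I(t,x) = \int_0^t f(tau,x) dtau in [0, eta T]
   and G(c,I) = c / (phi(c) e^(lam I) - B c).  As phi >= 0, the denominator is at least
   phi(c) - B c = 1, so |G(c,I)| <= c and G is Lipschitz on [0,C0] x [0,eta T].  Hence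
   C0 - g and D_h^+ g are controlled pointwise by C0 - c0, I, D_h^+ c0 and D_h^+ I, and
   after summation over the grid, Cauchy-Schwarz in time bounds the norms of I(t) and of
   D_h^+ I(t) = \int_0^t D_h^+ f by t times the time integrals of the norms of f and
   D_h^+ f.  Finally D_h^+ phi(g) = B D_h^+ g. *)

Lemma sum_n_le_Series (a : nat -> R) N :
  (forall n, 0 <= a n) -> ex_series a -> sum_n a N <= Series a.
Proof.
  intros Ha [l Hl]. rewrite (is_series_unique a l Hl), sum_n_Reals.
  apply sum_incr; [apply is_series_Reals; exact Hl|exact Ha].
Qed.

Lemma ex_series_bounded_nonneg (a : nat -> R) M :
  (forall n, 0 <= a n) -> (forall N, sum_n a N <= M) -> ex_series a /\ Series a <= M.
Proof.
  intros Ha HM.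
  assert (Hincr : forall N, sum_n a N <= sum_n a (S N)).
  { intros N; rewrite sum_Sn; change plus with Rplus; specialize (Ha (S N)); lra. }
  destruct (ex_finite_lim_seq_incr (sum_n a) M Hincr HM) as [l Hl].
  assert (Hs : is_series a l) by exact Hl.
  split; [exists l; exact Hs|]. rewrite (is_series_unique a l Hs).
  apply (is_lim_seq_le (sum_n a) (fun _ => M) l M); [exact HM|exact Hl|apply is_lim_seq_const].
Qed.

Lemma l2sq_nonneg h u : 0 <= h -> L2 u -> 0 <= l2sq h u.
Proof.
  intros Hh Hu. apply Rmult_le_pos; [exact Hh|].
  apply (Rle_trans _ (sum_n (fun k => u (S k) ^ 2) 0)).
  - rewrite sum_n_Reals; apply cond_pos_sum; intros; apply pow2_ge_0.
  - apply sum_n_le_Series; [intros; apply pow2_ge_0|exact Hu].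
Qed.

Lemma sq_le_l2sq h u k : 0 <= h -> L2 u -> h * u (S k) ^ 2 <= l2sq h u.
Proof.
  intros Hh Hu. apply Rmult_le_compat_l; [exact Hh|].
  apply (Rle_trans _ (sum_n (fun k => u (S k) ^ 2) k)).
  - destruct k as [|k]; [rewrite sum_O; lra|rewrite sum_Sn; change plus with Rplus].
    assert (0 <= sum_n (fun k => u (S k) ^ 2) k)
      by (rewrite sum_n_Reals; apply cond_pos_sum; intros; apply pow2_ge_0).
    lra.
  - apply sum_n_le_Series; [intros; apply pow2_ge_0|exact Hu].
Qed.

Lemma l2sq_le_lincomb h a b u v w : 0 <= h -> 0 <= a -> 0 <= b ->
  (forall k, u (S k) ^ 2 <= a * v (S k) ^ 2 + b * w (S k) ^ 2) -> L2 v -> L2 w ->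
  L2 u /\ l2sq h u <= a * l2sq h v + b * l2sq h w.
Proof.
  intros Hh Ha Hb Hle Hv Hw.
  assert (Hpt : forall k, 0 <= u (S k) ^ 2 <= a * v (S k) ^ 2 + b * w (S k) ^ 2)
    by (intros k; split; [apply pow2_ge_0|apply Hle]).
  assert (Hex : ex_series (fun k => a * v (S k) ^ 2 + b * w (S k) ^ 2)).
  { apply (ex_series_plus (V:=R_NormedModule));
      apply (ex_series_scal_l (V:=R_NormedModule)); assumption. }
  split.
  - apply (ex_series_le (V:=R_CompleteNormedModule) (fun k => u (S k) ^ 2)
      (fun k => a * v (S k) ^ 2 + b * w (S k) ^ 2)); [|exact Hex].
    intros k; change (Rabs (u (S k) ^ 2) <= a * v (S k) ^ 2 + b * w (S k) ^ 2).
    rewrite Rabs_pos_eq; apply Hpt.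
  - unfold l2sq.
    rewrite <- !Rmult_assoc, (Rmult_comm a), (Rmult_comm b), !Rmult_assoc, <- Rmult_plus_distr_l.
    apply Rmult_le_compat_l; [exact Hh|].
    rewrite <- !Series_scal_l, <- Series_plus
      by (apply (ex_series_scal_l (V:=R_NormedModule)); assumption).
    apply Series_le; assumption.
Qed.

Lemma l2sq_sq_ext h u v : (forall k, u (S k) ^ 2 = v (S k) ^ 2) ->
  (L2 u <-> L2 v) /\ l2sq h u = l2sq h v.
Proof.
  intros E; unfold L2, l2sq. split.
  - split; apply ex_series_ext; intros k; [|symmetry]; apply E.
  - rewrite (Series_ext _ _ E); reflexivity.
Qed.

Lemma RInt_sq_le (u : R -> R) t : 0 <= t ->
  ex_RInt u 0 t -> ex_RInt (fun s => u s ^ 2) 0 t ->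
  RInt u 0 t ^ 2 <= t * RInt (fun s => u s ^ 2) 0 t.
Proof.
  intros Ht Hu Hu2.
  destruct (Req_dec t 0) as [->|Ht0].
  { rewrite (RInt_point (V:=R_CompleteNormedModule)); change (zero : R) with 0; lra. }
  set (A := RInt u 0 t); set (Q := RInt (fun s => u s ^ 2) 0 t); set (m := A / t).
  assert (Hlin : ex_RInt (fun s => u s ^ 2 - 2 * m * u s) 0 t).
  { apply (ex_RInt_minus (V:=R_NormedModule)); [exact Hu2|].
    apply (ex_RInt_scal (V:=R_NormedModule)); exact Hu. }
  (* expanding [0 <= \int_0^t (u - m)^2] at the mean [m] gives [Q - A^2 / t >= 0] *)
  assert (Hvar : RInt (fun s => (u s - m) ^ 2) 0 t = Q - 2 * m * A + m ^ 2 * t).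
  { rewrite (RInt_ext _ (fun s => (u s ^ 2 - 2 * m * u s) + m ^ 2)) by (intros x _; simpl; ring).
    rewrite (RInt_plus (V:=R_CompleteNormedModule)) by (auto; apply ex_RInt_const).
    rewrite (RInt_minus (V:=R_CompleteNormedModule))
      by (auto; apply (ex_RInt_scal (V:=R_NormedModule)); exact Hu).
    rewrite (RInt_scal (V:=R_CompleteNormedModule)), (RInt_const (V:=R_CompleteNormedModule))
      by exact Hu.
    change (Q - 2 * m * A + (t - 0) * m ^ 2 = Q - 2 * m * A + m ^ 2 * t); ring. }
  assert (Hpos : 0 <= RInt (fun s => (u s - m) ^ 2) 0 t).
  { apply RInt_ge_0; [exact Ht| |intros; apply pow2_ge_0].
    apply (ex_RInt_ext (fun s => (u s ^ 2 - 2 * m * u s) + m ^ 2)); [intros x _; simpl; ring|].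
    apply (ex_RInt_plus (V:=R_NormedModule)); [exact Hlin|apply ex_RInt_const]. }
  rewrite Hvar in Hpos. unfold m in Hpos.
  replace (Q - 2 * (A / t) * A + (A / t) ^ 2 * t) with ((t * Q - A ^ 2) / t) in Hpos
    by (field; exact Ht0).
  assert (Htpos : 0 < t) by lra.
  apply Rmult_le_compat_l with (r := t) in Hpos; [|lra].
  replace (t * ((t * Q - A ^ 2) / t)) with (t * Q - A ^ 2) in Hpos by (field; exact Ht0).
  lra.
Qed.

Lemma RInt_sum_n (u : nat -> R -> R) a b N : (forall k, ex_RInt (u k) a b) ->
  ex_RInt (fun s => sum_n (fun k => u k s) N) a b /\
  RInt (fun s => sum_n (fun k => u k s) N) a b = sum_n (fun k => RInt (u k) a b) N.
Proof.
  intros Hu; induction N as [|N [IHex IHeq]].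
  - split.
    + apply (ex_RInt_ext (u 0%nat)); [intros; rewrite sum_O; reflexivity|apply Hu].
    + rewrite sum_O; apply RInt_ext; intros; rewrite sum_O; reflexivity.
  - assert (E : forall s, sum_n (fun k => u k s) (S N) = sum_n (fun k => u k s) N + u (S N) s)
      by (intros; rewrite sum_Sn; reflexivity).
    split.
    + apply (ex_RInt_ext (fun s => sum_n (fun k => u k s) N + u (S N) s));
        [intros; symmetry; apply E|].
      apply (ex_RInt_plus (V:=R_NormedModule)); [exact IHex|apply Hu].
    + rewrite (RInt_ext _ _ _ _ (fun x _ => E x)), (RInt_plus (V:=R_CompleteNormedModule)),
        IHeq, sum_Sn by (auto; apply Hu).
      reflexivity.
Qed.

Lemma RInt_le_extend_upper (F : R -> R) a b c : a <= b <= c -> ex_RInt F a c ->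
  (forall x, b < x < c -> 0 <= F x) -> RInt F a b <= RInt F a c.
Proof.
  intros Habc HF Hpos.
  assert (Hab : ex_RInt F a b) by (apply (ex_RInt_Chasles_1 F a b c); assumption).
  assert (Hbc : ex_RInt F b c) by (apply (ex_RInt_Chasles_2 F a b c); assumption).
  rewrite <- (RInt_Chasles F a b c Hab Hbc).
  assert (0 <= RInt F b c) by (apply RInt_ge_0; [lra|exact Hbc|exact Hpos]).
  change (RInt F a b <= RInt F a b + RInt F b c); lra.
Qed.

Definition tint (u : R -> nat -> R) (t : R) (k : nat) : R := RInt (fun s => u s k) 0 t.

Lemma l2sq_tint_le h T (u : R -> nat -> R) (V : R -> R) t : 0 < h -> 0 <= t <= T ->
  (forall k, ex_RInt (fun s => u s (S k)) 0 T) ->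
  (forall k, ex_RInt (fun s => u s (S k) ^ 2) 0 T) ->
  (forall s, 0 <= s <= T -> L2 (u s) /\ l2sq h (u s) <= V s) -> ex_RInt V 0 T ->
  L2 (tint u t) /\ l2sq h (tint u t) <= t * RInt V 0 T.
Proof.
  intros Hh Ht Hu Hu2 HV HexV.
  set (P N s := sum_n (fun k => u s (S k) ^ 2) N).
  assert (HP : forall N, ex_RInt (P N) 0 T /\
                 RInt (P N) 0 T = sum_n (fun k => RInt (fun s => u s (S k) ^ 2) 0 T) N)
    by (intros; apply (RInt_sum_n (fun k s => u s (S k) ^ 2)); exact Hu2).
  assert (HPt : forall N, RInt (P N) 0 t = sum_n (fun k => RInt (fun s => u s (S k) ^ 2) 0 t) N).
  { intros; apply (RInt_sum_n (fun k s => u s (S k) ^ 2)).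
    intros k; apply (ex_RInt_Chasles_1 (V:=R_CompleteNormedModule) _ 0 t T); [lra|apply Hu2]. }
  assert (HPV : forall N s, 0 <= s <= T -> h * P N s <= V s).
  { intros N s Hs; destruct (HV s Hs) as [HL Hle].
    apply (Rle_trans _ (l2sq h (u s))); [|exact Hle].
    apply Rmult_le_compat_l; [lra|].
    apply sum_n_le_Series; [intros; apply pow2_ge_0|exact HL]. }
  (* Cauchy-Schwarz in time for each node, then sum over the nodes under the integral *)
  assert (Hsum : forall N, sum_n (fun k => tint u t (S k) ^ 2) N <= t * RInt V 0 T / h).
  { intros N.
    apply (Rle_trans _ (t * RInt (P N) 0 t)).
    { rewrite HPt, <- (sum_n_mult_l (K:=R_Ring)), !sum_n_Reals.
      apply sum_growing; intros k; apply RInt_sq_le; [lra| |];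
        apply (ex_RInt_Chasles_1 (V:=R_CompleteNormedModule) _ 0 t T);
        [lra|apply Hu|lra|apply Hu2]. }
    assert (HPpos : forall x, 0 <= x <= T -> 0 <= P N x)
      by (intros; unfold P; rewrite sum_n_Reals; apply cond_pos_sum; intros; apply pow2_ge_0).
    assert (HPT : h * RInt (P N) 0 T <= RInt V 0 T).
    { rewrite <- (RInt_scal (V:=R_CompleteNormedModule)) by apply HP.
      apply RInt_le; [lra|apply (ex_RInt_scal (V:=R_NormedModule)); apply HP|exact HexV|].
      intros; apply HPV; lra. }
    assert (RInt (P N) 0 t <= RInt (P N) 0 T)
      by (apply RInt_le_extend_upper; [lra|apply HP|intros; apply HPpos; lra]).
    apply (Rmult_le_reg_l h); [exact Hh|].
    replace (h * (t * RInt V 0 T / h)) with (t * RInt V 0 T) by (field; lra).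
    replace (h * (t * RInt (P N) 0 t)) with (t * (h * RInt (P N) 0 t)) by ring.
    apply Rmult_le_compat_l; [lra|].
    apply (Rle_trans _ (h * RInt (P N) 0 T)); [apply Rmult_le_compat_l; lra|exact HPT]. }
  destruct (ex_series_bounded_nonneg _ _ (fun _ => pow2_ge_0 _) Hsum) as [Hex Hle].
  split; [exact Hex|].
  unfold l2sq. apply (Rmult_le_compat_l h) in Hle; [|lra].
  replace (h * (t * RInt V 0 T / h)) with (t * RInt V 0 T) in Hle by (field; lra).
  exact Hle.
Qed.

Lemma Dh_tint h (u : R -> nat -> R) t k :
  ex_RInt (fun s => u s (S (S k))) 0 t -> ex_RInt (fun s => u s (S k)) 0 t ->
  Dh h (tint u t) (S k) = tint (fun s => Dh h (u s)) t (S k).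
Proof.
  intros H2 H1; unfold Dh, tint, Rdiv.
  rewrite (RInt_ext (fun s => (u s (S (S k)) - u s (S k)) * / h)
                    (fun s => / h * (u s (S (S k)) - u s (S k)))) by (intros; simpl; ring).
  rewrite (RInt_scal (V:=R_CompleteNormedModule)), (RInt_minus (V:=R_CompleteNormedModule))
    by (auto; apply (ex_RInt_minus (V:=R_NormedModule)); auto).
  rewrite Rmult_comm; reflexivity.
Qed.

Lemma exp_le_mono x y : x <= y -> exp x <= exp y.
Proof. intros [H|H]; [left; apply exp_increasing; exact H|right; rewrite H; reflexivity]. Qed.

Lemma exp_dist_le Y x y : x <= Y -> y <= Y -> Rabs (exp x - exp y) <= exp Y * Rabs (x - y).
Proof.
  assert (Hexp : forall a b, a <= b -> b <= Y -> exp b - exp a <= exp Y * (b - a)).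
  { intros a b Hab HbY.
    assert (E : exp a = exp b * exp (a - b)) by (rewrite <- exp_plus; f_equal; ring).
    pose proof (exp_ineq1_le (a - b)); pose proof (exp_pos b); pose proof (exp_le_mono b Y HbY).
    nra. }
  intros HxY HyY; destruct (Rle_lt_dec y x) as [Hyx|Hxy].
  - pose proof (exp_le_mono y x Hyx).
    rewrite !Rabs_pos_eq by lra. apply Hexp; assumption.
  - pose proof (exp_le_mono x y (Rlt_le _ _ Hxy)).
    rewrite Rabs_minus_sym, (Rabs_minus_sym x), !Rabs_pos_eq by lra. apply Hexp; lra.
Qed.

Lemma Rabs_div_le x D : 1 <= D -> Rabs (x / D) <= Rabs x.
Proof.
  intros HD; rewrite Rabs_div, (Rabs_pos_eq D) by lra.
  pose proof (Rabs_pos x). apply (Rmult_le_reg_r D); [lra|].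
  field_simplify; nra.
Qed.

Definition gmap (B lam c I : R) : R := c / (phi B c * exp (lam * I) - B * c).

Lemma gmap_denom_ge1 B lam c I : 0 <= phi B c -> 0 <= lam * I ->
  1 <= phi B c * exp (lam * I) - B * c.
Proof. intros Hp HI; pose proof (exp_ineq1_le (lam * I)); unfold phi in *; nra. Qed.

Lemma gmap_0 B lam c : gmap B lam c 0 = c.
Proof. unfold gmap, phi; rewrite Rmult_0_r, exp_0; field_simplify; [reflexivity|lra]. Qed.

Lemma gmap_abs_le B lam c I : 0 <= c -> 0 <= phi B c -> 0 <= lam * I ->
  Rabs (gmap B lam c I) <= c.
Proof.
  intros Hc Hp HI; rewrite <- (Rabs_pos_eq c) at 2 by exact Hc.
  apply Rabs_div_le, gmap_denom_ge1; assumption.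
Qed.

Definition glip (lam C0 pmax Y : R) : R := exp (lam * Y) * (1 + C0 * pmax * lam).

Lemma gmap_lipschitz B lam C0 pmax Y c c' I I' : 0 <= lam ->
  0 <= c <= C0 -> 0 <= c' -> 0 <= phi B c -> 0 <= phi B c' <= pmax ->
  0 <= I <= Y -> 0 <= I' <= Y ->
  Rabs (gmap B lam c I - gmap B lam c' I') <=
  glip lam C0 pmax Y * (Rabs (c - c') + Rabs (I - I')).
Proof.
  intros Hlam Hc Hc' Hp Hp' HI HI'.
  set (E := exp (lam * I)); set (E' := exp (lam * I')); set (EY := exp (lam * Y)).
  set (D := phi B c * E - B * c); set (D' := phi B c' * E' - B * c').
  assert (HD : 1 <= D) by (apply gmap_denom_ge1; nra).
  assert (HD' : 1 <= D') by (apply gmap_denom_ge1; nra).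
  assert (Hdiff : gmap B lam c I - gmap B lam c' I' =
                  ((c - c') * E + c * phi B c' * (E' - E)) / (D * D')).
  { assert (Hnum : c * D' - c' * D = (c - c') * E + c * phi B c' * (E' - E))
      by (unfold D, D', phi; ring).
    unfold gmap; fold E E' D D'; rewrite <- Hnum; field; lra. }
  assert (HE : 1 <= E <= EY).
  { split; [pose proof (exp_ineq1_le (lam * I)); unfold E; nra|apply exp_le_mono; nra]. }
  assert (HdE : Rabs (E' - E) <= EY * (lam * Rabs (I - I'))).
  { assert (Hl : Rabs (lam * I' - lam * I) = lam * Rabs (I - I')).
    { rewrite <- Rmult_minus_distr_l, Rabs_mult, (Rabs_pos_eq lam), (Rabs_minus_sym I')
        by exact Hlam; reflexivity. }
    rewrite <- Hl; apply exp_dist_le; nra. }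
  assert (Hnum : Rabs ((c - c') * E + c * phi B c' * (E' - E)) <=
                 EY * Rabs (c - c') + C0 * pmax * (EY * (lam * Rabs (I - I')))).
  { eapply Rle_trans; [apply Rabs_triang|].
    rewrite !Rabs_mult, (Rabs_pos_eq E), (Rabs_pos_eq c), (Rabs_pos_eq (phi B c')) by lra.
    pose proof (Rabs_pos (c - c')); pose proof (Rabs_pos (E' - E)).
    apply Rplus_le_compat; [nra|].
    apply Rmult_le_compat; [nra|lra|apply Rmult_le_compat; lra|exact HdE]. }
  rewrite Hdiff; eapply Rle_trans; [apply Rabs_div_le; nra|].
  unfold glip; fold EY.
  pose proof (Rabs_pos (c - c')); pose proof (Rabs_pos (I - I')).
  assert (0 <= C0 * pmax * lam) by (assert (0 <= C0 * pmax) by nra; nra).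
  assert (0 < EY) by apply exp_pos.
  apply (Rle_trans _ _ _ Hnum).
  assert (0 <= EY * (C0 * pmax * lam) * Rabs (c - c')) by (repeat apply Rmult_le_pos; lra).
  assert (0 <= EY * Rabs (I - I')) by (apply Rmult_le_pos; lra).
  lra.
Qed.

Lemma sq_le_of_Rabs_le_sum x a b L : 0 <= L -> Rabs x <= L * (Rabs a + Rabs b) ->
  x ^ 2 <= 2 * L ^ 2 * (a ^ 2 + b ^ 2).
Proof.
  intros HL Hx; rewrite <- (pow2_abs x), <- (pow2_abs a), <- (pow2_abs b).
  pose proof (Rabs_pos x); pose proof (Rabs_pos a); pose proof (Rabs_pos b).
  pose proof (pow2_ge_0 (Rabs a - Rabs b)).
  assert (Rabs x ^ 2 <= (L * (Rabs a + Rabs b)) ^ 2) by (apply pow_incr; lra).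
  nra.
Qed.

Section GridProfile.

Variables (B lam C0 pmax Y : R) (c J : nat -> R).
Hypotheses (Hlam : 0 <= lam) (Hc : forall k, 0 <= c k <= C0)
  (Hphi : forall k, 0 <= phi B (c k) <= pmax) (HJ : forall k, 0 <= J (S k) <= Y).

Let L := glip lam C0 pmax Y.
Let G k := gmap B lam (c k) (J k).

Lemma glip_nonneg : 0 <= L.
Proof.
  unfold L, glip; pose proof (exp_pos (lam * Y)); pose proof (Hc 0%nat); pose proof (Hphi 0%nat).
  assert (0 <= C0 * pmax) by nra; assert (0 <= C0 * pmax * lam) by nra; nra.
Qed.

Lemma l2sq_sub_gmap_le h : 0 <= h -> L2 (fun k => C0 - c k) -> L2 J ->
  L2 (fun k => C0 - G k) /\
  l2sq h (fun k => C0 - G k) <= 2 * l2sq h (fun k => C0 - c k) + 4 * L ^ 2 * l2sq h J.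
Proof.
  intros Hh HLc HLJ; pose proof glip_nonneg.
  apply l2sq_le_lincomb; [exact Hh|lra|nra| |exact HLc|exact HLJ].
  intros k; unfold G.
  assert (HY : 0 <= 0 <= Y) by (pose proof (HJ k); lra).
  pose proof (gmap_lipschitz B lam C0 pmax Y (c (S k)) (c (S k)) (J (S k)) 0 Hlam (Hc _)
    (proj1 (Hc _)) (proj1 (Hphi _)) (Hphi _) (HJ k) HY) as Hlip.
  rewrite gmap_0, Rminus_diag, Rminus_0_r in Hlip.
  apply sq_le_of_Rabs_le_sum in Hlip; [|exact glip_nonneg].
  pose proof (pow2_ge_0 (C0 - c (S k) + (gmap B lam (c (S k)) (J (S k)) - c (S k)))).
  fold L in Hlip; nra.
Qed.

Lemma l2sq_Dh_gmap_le h : 0 < h -> L2 (Dh h c) -> L2 (Dh h J) ->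
  L2 (Dh h G) /\
  l2sq h (Dh h G) <= 2 * L ^ 2 * l2sq h (Dh h c) + 2 * L ^ 2 * l2sq h (Dh h J).
Proof.
  intros Hh HLc HLJ; pose proof glip_nonneg.
  apply l2sq_le_lincomb; [lra|nra|nra| |exact HLc|exact HLJ].
  intros k; unfold Dh, G, Rdiv; rewrite !Rpow_mult_distr.
  pose proof (gmap_lipschitz B lam C0 pmax Y (c (S (S k))) (c (S k)) (J (S (S k))) (J (S k))
    Hlam (Hc _) (proj1 (Hc _)) (proj1 (Hphi _)) (Hphi _) (HJ _) (HJ _)) as Hlip.
  apply sq_le_of_Rabs_le_sum in Hlip; [|exact glip_nonneg].
  apply Rmult_le_compat_r with (r := (/ h) ^ 2) in Hlip; [|apply pow2_ge_0].
  fold L in Hlip; lra.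
Qed.

End GridProfile.

(* [f] is only constrained for times in [0,T], while [ex_RInt_continuous] asks for
   continuity on R at the endpoints too: clamping time gives a continuous extension. *)
Definition clamp (T s : R) : R := Rmax 0 (Rmin T s).

Lemma clamp_id T t : 0 <= t <= T -> clamp T t = t.
Proof. intros; unfold clamp, Rmax, Rmin; repeat destruct Rle_dec; lra. Qed.

Lemma clamp_in T s : 0 <= T -> 0 <= clamp T s <= T.
Proof. intros; unfold clamp, Rmax, Rmin; repeat destruct Rle_dec; lra. Qed.

Lemma clamp_dist T s z : 0 <= T -> Rabs (clamp T s - clamp T z) <= Rabs (s - z).
Proof.
  intros; unfold clamp, Rmax, Rmin; repeat destruct Rle_dec;
    unfold Rabs; repeat destruct Rcase_abs; lra.
Qed.

Lemma ex_RInt_clamp (F : R -> R) T : 0 <= T ->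
  (forall z, continuous (fun s => F (clamp T s)) z) ->
  ex_RInt F 0 T /\ ex_RInt (fun s => F s ^ 2) 0 T.
Proof.
  intros HT HF.
  assert (Hin : forall x, Rmin 0 T < x < Rmax 0 T -> clamp T x = x)
    by (intros x; rewrite Rmin_left, Rmax_right by exact HT; intros; apply clamp_id; lra).
  split.
  - apply (ex_RInt_ext (fun s => F (clamp T s))); [intros x Hx; rewrite Hin; auto|].
    apply (ex_RInt_continuous (V:=R_CompleteNormedModule)); auto.
  - apply (ex_RInt_ext (fun s => F (clamp T s) ^ 2)); [intros x Hx; rewrite Hin; auto|].
    apply (ex_RInt_continuous (V:=R_CompleteNormedModule)); intros z _.
    apply (continuous_ext (fun s => F (clamp T s) * F (clamp T s))); [intros; simpl; ring|].
    apply (continuous_mult (K:=R_AbsRing)); auto.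
Qed.

Lemma real_supT_ub T (F : R -> R) (r K : R) :
  Rbar_le (Rbar_plus (supT T F) r) K -> forall t, 0 <= t <= T -> F t <= real (supT T F).
Proof.
  intros Hb t Ht; unfold supT in *.
  destruct (Lub_Rbar_correct (fun y => exists t, 0 <= t <= T /\ y = F t)) as [Hub _].
  pose proof (Hub (F t) (ex_intro _ t (conj Ht eq_refl))) as Hle.
  destruct (Lub_Rbar (fun y => exists t, 0 <= t <= T /\ y = F t)); simpl in *; tauto.
Qed.

Lemma l2sq_Dh_phi B h (u : nat -> R) : B ^ 2 = 1 ->
  (L2 (Dh h (fun k => phi B (u k))) <-> L2 (Dh h u)) /\
  l2sq h (Dh h (fun k => phi B (u k))) = l2sq h (Dh h u).
Proof.
  intros HB; apply l2sq_sq_ext; intros k.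
  replace (Dh h (fun k => phi B (u k)) (S k)) with (B * Dh h u (S k))
    by (unfold Dh, phi, Rdiv; ring).
  rewrite Rpow_mult_distr, HB; ring.
Qed.

Section ConditionF.

Variables (h T eta K : R) (psi : R -> R) (f : R -> nat -> R).
Hypotheses (Hh : 0 < h) (HT : 0 <= T) (HF : condF h T eta psi K f).

Lemma condF_continuous k z : continuous (fun s => f (clamp T s) (S k)) z.
Proof.
  destruct HF as [HL2 [Hcont _]].
  apply continuity_pt_filterlim.
  unfold continuity_pt, continue_in, limit1_in, limit_in; simpl; unfold R_dist.
  intros eps Heps.
  destruct (Hcont (clamp T z) (clamp_in T z HT) (eps * sqrt h)) as [d [Hd Hs]].
  { apply Rmult_lt_0_compat; [exact Heps|apply sqrt_lt_R0, Hh]. }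
  exists d; split; [exact Hd|]. intros x [_ Hx].
  assert (Hsd : Rabs (clamp T x - clamp T z) < d)
    by (eapply Rle_lt_trans; [apply clamp_dist; exact HT|exact Hx]).
  specialize (Hs (clamp T x) (clamp_in T x HT) Hsd).
  set (v := fun k => f (clamp T x) k - f (clamp T z) k) in Hs.
  assert (HLv : L2 v).
  { apply (l2sq_le_lincomb h 2 2 v (f (clamp T x)) (f (clamp T z))); try lra;
      [|apply HL2, clamp_in, HT|apply HL2, clamp_in, HT].
    intros j; unfold v; pose proof (pow2_ge_0 (f (clamp T x) (S j) + f (clamp T z) (S j))); nra. }
  (* a single node is controlled by the grid norm: [h v_k^2 <= ||v||^2 < eps^2 h] *)
  pose proof (sq_le_l2sq h v k (Rlt_le _ _ Hh) HLv) as Hk.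
  set (X := l2sq h v) in Hs, Hk.
  assert (HX : X < eps ^ 2 * h).
  { pose proof (sqrt_pos X).
    rewrite <- (sqrt_sqrt X) by (apply l2sq_nonneg; [lra|exact HLv]).
    replace (eps ^ 2 * h) with ((eps * sqrt h) * (eps * sqrt h))
      by (rewrite <- (sqrt_sqrt h) at 3 by lra; ring).
    apply Rmult_le_0_lt_compat; assumption. }
  assert (Hsq : v (S k) ^ 2 < eps ^ 2) by (apply (Rmult_lt_reg_l h); lra).
  fold (v (S k)); destruct (Rlt_le_dec (Rabs (v (S k))) eps) as [Hlt|Hge]; [exact Hlt|].
  rewrite <- (pow2_abs (v (S k))) in Hsq.
  pose proof (pow_incr eps (Rabs (v (S k))) 2 (conj (Rlt_le _ _ Heps) Hge)); lra.
Qed.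

Lemma condF_ex_RInt k : ex_RInt (fun s => f s (S k)) 0 T /\ ex_RInt (fun s => f s (S k) ^ 2) 0 T.
Proof. apply (ex_RInt_clamp (fun s => f s (S k))); [exact HT|apply condF_continuous]. Qed.

Lemma condF_ex_RInt_Dh k :
  ex_RInt (fun s => Dh h (f s) (S k)) 0 T /\ ex_RInt (fun s => Dh h (f s) (S k) ^ 2) 0 T.
Proof.
  apply (ex_RInt_clamp (fun s => Dh h (f s) (S k))); [exact HT|intros z; unfold Dh, Rdiv].
  apply (continuous_mult (K:=R_AbsRing)); [|apply continuous_const].
  apply (continuous_minus (V:=R_NormedModule)); apply condF_continuous.
Qed.

Lemma condF_ex_RInt_sub t k : 0 <= t <= T -> ex_RInt (fun s => f s (S k)) 0 t.
Proof.
  intros Ht; apply (ex_RInt_Chasles_1 (V:=R_CompleteNormedModule) _ 0 t T); [lra|].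
  exact (proj1 (condF_ex_RInt k)).
Qed.

Lemma condF_tint_range t k : 0 <= t <= T -> 0 <= tint f t (S k) <= eta * T.
Proof.
  destruct HF as [_ [_ [_ [_ [_ [_ [_ Hrange]]]]]]].
  intros Ht; pose proof (condF_ex_RInt_sub t k Ht) as Hex.
  pose proof (Hrange 0 0%nat (conj (Rle_refl 0) HT)).
  split.
  - apply RInt_ge_0; [lra|exact Hex|intros; apply Hrange; lra].
  - apply (Rle_trans _ (RInt (fun _ => eta) 0 t)).
    + apply RInt_le; [lra|exact Hex|apply ex_RInt_const|intros; apply Hrange; lra].
    + rewrite (RInt_const (V:=R_CompleteNormedModule)); change ((t - 0) * eta <= eta * T); nra.
Qed.

Lemma condF_supT_ub t : 0 <= t <= T -> l2sq h (f t) <= real (supT T (fun s => l2sq h (f s))).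
Proof.
  destruct HF as [_ [_ [_ [_ [Hbound _]]]]].
  exact (real_supT_ub T _ _ _ Hbound t).
Qed.

Lemma condF_supT_nonneg : 0 <= real (supT T (fun s => l2sq h (f s))).
Proof.
  destruct HF as [HL2 _].
  apply (Rle_trans _ (l2sq h (f 0))); [apply l2sq_nonneg; [lra|apply HL2; lra]|].
  apply condF_supT_ub; lra.
Qed.

Lemma condF_RInt_Dh_nonneg : 0 <= RInt (fun s => l2sq h (Dh h (f s))) 0 T.
Proof.
  destruct HF as [_ [_ [HL2D [HexD _]]]].
  apply RInt_ge_0; [exact HT|exact HexD|intros; apply l2sq_nonneg; [lra|apply HL2D; lra]].
Qed.

Lemma condF_l2sq_tint t : 0 <= t <= T ->
  L2 (tint f t) /\ l2sq h (tint f t) <= t * (T * real (supT T (fun s => l2sq h (f s)))).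
Proof.
  destruct HF as [HL2 _].
  intros Ht; pose proof condF_supT_ub as Hsup.
  set (Ssup := real (supT T (fun s => l2sq h (f s)))) in *; clearbody Ssup.
  replace (T * Ssup) with (RInt (fun _ => Ssup) 0 T)
    by (rewrite (RInt_const (V:=R_CompleteNormedModule)); change ((T - 0) * Ssup = T * Ssup); ring).
  apply (l2sq_tint_le h T f (fun _ => Ssup) t Hh Ht);
    [intros k; exact (proj1 (condF_ex_RInt k))|intros k; exact (proj2 (condF_ex_RInt k))|
     |apply ex_RInt_const].
  intros s Hs; split; [apply HL2, Hs|apply Hsup, Hs].
Qed.

Lemma condF_l2sq_Dh_tint t : 0 <= t <= T ->
  L2 (Dh h (tint f t)) /\
  l2sq h (Dh h (tint f t)) <= t * RInt (fun s => l2sq h (Dh h (f s))) 0 T.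
Proof.
  destruct HF as [_ [_ [HL2D [HexD _]]]].
  intros Ht.
  destruct (l2sq_sq_ext h (Dh h (tint f t)) (tint (fun s => Dh h (f s)) t)) as [HL Heq].
  { intros k; rewrite Dh_tint by (apply condF_ex_RInt_sub, Ht); reflexivity. }
  rewrite HL, Heq.
  apply l2sq_tint_le;
    [exact Hh|exact Ht|intros k; exact (proj1 (condF_ex_RInt_Dh k))
    |intros k; exact (proj2 (condF_ex_RInt_Dh k))| |exact HexD].
  intros s Hs; split; [apply HL2D, Hs|lra].
Qed.


Section Estimates.

Variables (B lam C0 pmax : R) (c0 : nat -> R).
Hypotheses (Hlam : 0 <= lam) (Hc : forall k, 0 <= c0 k <= C0)
  (Hphi : forall k, 0 <= phi B (c0 k) <= pmax).

Let L := glip lam C0 pmax (eta * T).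

Lemma gfun_abs_le t k : 0 <= t <= T -> Rabs (gfun B lam c0 f t (S k)) <= C0.
Proof.
  intros Ht; pose proof (condF_tint_range t k Ht).
  change (Rabs (gmap B lam (c0 (S k)) (tint f t (S k))) <= C0).
  apply (Rle_trans _ (c0 (S k))); [apply gmap_abs_le; [apply Hc|apply Hphi|nra]|apply Hc].
Qed.

Lemma l2sq_sub_gfun_le t : 0 <= t <= T -> L2 (fun k => C0 - c0 k) ->
  L2 (fun k => C0 - gfun B lam c0 f t k) /\
  l2sq h (fun k => C0 - gfun B lam c0 f t k) <=
  2 * (l2sq h (fun k => C0 - c0 k) + 2 * L ^ 2 * T ^ 2 * real (supT T (fun s => l2sq h (f s)))).
Proof.
  intros Ht HLc0.
  destruct (condF_l2sq_tint t Ht) as [HLJ HlJ].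
  destruct (l2sq_sub_gmap_le B lam C0 pmax (eta * T) c0 (tint f t) Hlam Hc Hphi
    (fun k => condF_tint_range t k Ht) h (Rlt_le _ _ Hh) HLc0 HLJ)
    as [HLg Hg].
  split; [exact HLg|]; apply (Rle_trans _ _ _ Hg); fold L.
  pose proof condF_supT_nonneg.
  assert (l2sq h (tint f t) <= T ^ 2 * real (supT T (fun s => l2sq h (f s))))
    by (apply (Rle_trans _ _ _ HlJ); rewrite <- Rmult_assoc; apply Rmult_le_compat_r; nra).
  assert (0 <= L ^ 2) by apply pow2_ge_0.
  nra.
Qed.

Lemma l2sq_Dh_gfun_le t : 0 <= t <= T -> L2 (Dh h c0) ->
  L2 (Dh h (gfun B lam c0 f t)) /\
  l2sq h (Dh h (gfun B lam c0 f t)) <=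
  2 * L ^ 2 * (l2sq h (Dh h c0) + T * RInt (fun s => l2sq h (Dh h (f s))) 0 T).
Proof.
  intros Ht HLDc0.
  destruct (condF_l2sq_Dh_tint t Ht) as [HLJ HlJ].
  destruct (l2sq_Dh_gmap_le B lam C0 pmax (eta * T) c0 (tint f t) Hlam Hc Hphi
    (fun k => condF_tint_range t k Ht) h Hh HLDc0 HLJ) as [HLg Hg].
  split; [exact HLg|]; apply (Rle_trans _ _ _ Hg); fold L.
  pose proof (condF_RInt_Dh_nonneg).
  assert (0 <= L ^ 2) by apply pow2_ge_0.
  rewrite Rmult_plus_distr_l; apply Rplus_le_compat_l, Rmult_le_compat_l; [lra|].
  apply (Rle_trans _ _ _ HlJ), Rmult_le_compat_r; lra.
Qed.

End Estimates.

End ConditionF.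

Theorem mainTheorem6 (B C0 cm lam T eta : R) :
  (B = 1 \/ B = -1) -> 0 < cm -> cm <= C0 -> 0 < lam -> 0 < T -> 0 < eta ->
  (B = 1 -> eta < 1) ->
  (exists phimin phimax, 0 < phimin /\ phimin <= phimax /\
     forall c, 0 <= c <= C0 -> phimin <= phi B c <= phimax) ->
  exists k1 kappa C1hat C2hat : R,
    0 < k1 /\ 0 < kappa /\ 0 < C1hat /\ 0 < C2hat /\
    forall (h : R) (psi : R -> R) (beta : R) (s0 c0 : nat -> R) (K : R)
           (f : R -> nat -> R),
      0 < h ->
      1 / 4 < beta < 1 / 2 -> holder beta T psi ->
      (forall t, 0 <= t <= T -> 0 <= psi t <= eta) -> psi 0 = 0 ->
      s0 0%nat = 0 -> (forall k, 0 <= s0 k <= eta) -> L2 s0 -> L2 (Dh h s0) ->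
      (forall k, cm <= c0 k <= C0) ->
      L2 (fun k => C0 - c0 k) -> L2 (Dh h c0) ->
      0 < K -> condF h T eta psi K f ->
      let g := gfun B lam c0 f in
      (forall t, 0 <= t <= T ->
         L2 (fun k => C0 - g t k) /\
         l2sq h (fun k => C0 - g t k)
           <= k1 * (l2sq h (fun k => C0 - c0 k)
                    + kappa * real (supT T (fun t' => l2sq h (f t'))))) /\
      (forall t k, 0 <= t <= T -> (1 <= k)%nat -> Rabs (g t k) <= C1hat) /\
      (forall t, 0 <= t <= T ->
         L2 (Dh h (g t)) /\
         l2sq h (Dh h (g t))
           <= C2hat * T * (l2sq h (Dh h c0)
                           + kappa * RInt (fun t' => l2sq h (Dh h (f t'))) 0 T)) /\
      (forall t, 0 <= t <= T ->
         L2 (Dh h (fun k => phi B (g t k))) /\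
         l2sq h (Dh h (fun k => phi B (g t k)))
           <= Rabs B * (C2hat * T * (l2sq h (Dh h c0)
                           + kappa * RInt (fun t' => l2sq h (Dh h (f t'))) 0 T))).
Proof.
  intros HB Hcm HcmC Hlam HT _ _ [pmin [pmax [Hpmin [Hpm Hphi]]]].
  set (L := glip lam C0 pmax (eta * T)).
  assert (HL : 0 < L ^ 2).
  { apply pow_lt; unfold L, glip; pose proof (exp_pos (lam * (eta * T))).
    assert (0 < C0 * pmax * lam) by (repeat apply Rmult_lt_0_compat; lra); nra. }
  exists 2, (T * (1 + 2 * L ^ 2 * T)), C0, (2 * L ^ 2 / T).
  split; [lra|split; [nra|split; [lra|split; [apply Rdiv_lt_0_compat; lra|]]]].
  intros h psi beta s0 c0 K f Hh _ _ _ _ _ _ _ _ Hc0 HLc0 HLDc0 _ HF g; unfold g.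
  assert (HT0 : 0 <= T) by lra.
  assert (Hlam0 : 0 <= lam) by lra.
  assert (Hc : forall k, 0 <= c0 k <= C0) by (intros k; specialize (Hc0 k); lra).
  assert (Hphic : forall k, 0 <= phi B (c0 k) <= pmax)
    by (intros k; specialize (Hphi _ (Hc k)); lra).
  assert (HDg : forall t, 0 <= t <= T -> L2 (Dh h (gfun B lam c0 f t)) /\
    l2sq h (Dh h (gfun B lam c0 f t)) <= 2 * L ^ 2 / T * T * (l2sq h (Dh h c0)
      + T * (1 + 2 * L ^ 2 * T) * RInt (fun t' => l2sq h (Dh h (f t'))) 0 T)).
  { intros t Ht; destruct (l2sq_Dh_gfun_le h T eta K psi f Hh HT0 HF
      B lam C0 pmax c0 Hlam0 Hc Hphic t Ht HLDc0) as [HLg Hg].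
    split; [exact HLg|]; apply (Rle_trans _ _ _ Hg).
    replace (2 * L ^ 2 / T * T) with (2 * L ^ 2) by (field; lra).
    apply Rmult_le_compat_l, Rplus_le_compat_l, Rmult_le_compat_r; [lra| |nra].
    exact (condF_RInt_Dh_nonneg h T eta K psi f Hh HT0 HF). }
  refine (conj _ (conj _ (conj HDg _))).
  - intros t Ht; destruct (l2sq_sub_gfun_le h T eta K psi f Hh HT0 HF
      B lam C0 pmax c0 Hlam0 Hc Hphic t Ht HLc0) as [HLg Hg].
    split; [exact HLg|]; apply (Rle_trans _ _ _ Hg); fold L.
    apply Rmult_le_compat_l, Rplus_le_compat_l, Rmult_le_compat_r; [lra| |nra].
    exact (condF_supT_nonneg h T eta K psi f Hh HT0 HF).
  - intros t [|k] Ht Hk; [lia|].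
    exact (gfun_abs_le h T eta K psi f Hh HT0 HF B lam C0 pmax c0 Hlam0 Hc Hphic t k Ht).
  - intros t Ht; destruct (HDg t Ht) as [HLg Hg].
    assert (HB1 : Rabs B = 1 /\ B ^ 2 = 1)
      by (destruct HB as [->| ->]; rewrite ?Rabs_R1, ?Rabs_m1; split; ring).
    destruct (l2sq_Dh_phi B h (gfun B lam c0 f t) (proj2 HB1)) as [HLeq Heq].
    rewrite HLeq, Heq, (proj1 HB1), Rmult_1_l; split; assumption.
Qed.
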